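(* Let $\Gamma$ be a 3-colex and $c\in\{r,b,g,y\}$. The 3-cells of the minor complex $\Gamma^{*\setminus c}$ can be indexed by the $c$-vertices of $\Gamma^*$, the 3-cell $\nu_v$ indexed by the $c$-vertex $v$ being formed by merging all tetrahedra of $\Gamma^*$ incident on $v$; and the boundary of $\nu_v$ is the mod-2 sum of the $c$-faces of the tetrahedra incident on $v$: $\partial(\nu_v)=\sum_{\nu:\,v\in\nu}f^c_{\ni\nu}$.
   Context: Colors are $\{r,b,g,y\}$. A 3-colex $\Gamma$ is a 3-dimensional cell complex without boundary in which every vertex is 4-valent and lies in exactly four 3-cells, and whose 3-cells are properly 4-colored: every face lies in exactly two 3-cells, which have different colors. The dual complex $\Gamma^*$ has an $i$-cell for every $(3-i)$-cell of $\Gamma$, with incidences reversed; every 3-cell of $\Gamma^*$ is a tetrahedron. A vertex of $\Gamma^*$ is given the color of the corresponding 3-cell of $\Gamma$, so the four vertices of each tetrahedron have distinct colors. A face of $\Gamma^*$ is a $c$-face if none of its vertices has color $c$; each tetrahedron $\nu$ has a unique $c$-face, denoted $f^c_{\ni\nu}$. The minor complex $\Gamma^{*\setminus c}$ is obtained from $\Gamma^*$ by deleting all vertices of color $c$ together with all edges and faces incident to them; its 3-cells are the regions formed by merging tetrahedra of $\Gamma^*$ that are no longer separated by a remaining face. *)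

From HB Require Import structures.
From mathcomp Require Import all_boot.
Set Implicit Arguments. Unset Strict Implicit. Unset Printing Implicit Defensive.

(* The four colours {r,b,g,y}, encoded as r = 0, b = 1, g = 2, y = 3. *)
Definition color := 'I_4.

Record complex3 := Complex3 {
  vtx : finType;
  edg : finType;
  fac : finType;
  cel : finType;
  ends : edg -> {set vtx};
  fedges : fac -> {set edg};
  cfaces : cel -> {set fac};
  ccol : cel -> color
}.

Section Incidence.
Variable G : complex3.

Definition edges_at (u : vtx G) : {set edg G} := [set e | u \in ends e].
Definition face_vertices (f : fac G) : {set vtx G} :=
  \bigcup_(e in fedges f) ends e.
Definition cell_edges (C : cel G) : {set edg G} :=
  \bigcup_(f in cfaces C) fedges f.
Definition cell_vertices (C : cel G) : {set vtx G} :=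
  \bigcup_(e in cell_edges C) ends e.
Definition cells_at (u : vtx G) : {set cel G} := [set C | u \in cell_vertices C].
Definition cells_of_face (f : fac G) : {set cel G} := [set C | f \in cfaces C].
Definition cell_adj (C : cel G) : rel (vtx G) :=
  fun u w => [exists e, [&& e \in cell_edges C, u \in ends e & w \in ends e]].

(* 3-colex axioms.  The first five are the paper's definition; the
   "cell complex" axioms are combinatorial consequences of Gamma being a
   (3-manifold) cell complex whose cells are balls. *)
Record is_colex3 : Prop := IsColex3 {
  cx_edge : forall e : edg G, #|ends e| = 2;
  cx_valence : forall u : vtx G, #|edges_at u| = 4;
  cx_four_cells : forall u : vtx G, #|cells_at u| = 4;
  (* no boundary: every face lies in exactly two 3-cells ... *)
  cx_face_two : forall f : fac G, #|cells_of_face f| = 2;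
  cx_face_col : forall (f : fac G) (C1 C2 : cel G),
      f \in cfaces C1 -> f \in cfaces C2 -> C1 != C2 -> ccol C1 != ccol C2;
  cx_cell_nonempty : forall C : cel G, cell_vertices C != set0;
  cx_cell_connected : forall (C : cel G) (u w : vtx G),
      u \in cell_vertices C -> w \in cell_vertices C -> connect (cell_adj C) u w;
  cx_corner : forall (u : vtx G) (C : cel G),
      u \in cell_vertices C -> #|edges_at u :&: cell_edges C| = 3;
  cx_adjacent : forall (u : vtx G) (C1 C2 : cel G),
      u \in cell_vertices C1 -> u \in cell_vertices C2 -> C1 != C2 ->
      exists2 f, f \in cfaces C1 :&: cfaces C2 & u \in face_vertices f
}.

(* ---- The dual complex Gamma^* ----
   vertex of Gamma^*  <-> 3-cell C of Gamma (coloured ccol C)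
   tetrahedron        <-> vertex u of Gamma; its vertices are cells_at u
   face of Gamma^*    <-> edge e of Gamma; its vertices are the 3-cells
                          containing e; the faces of the tetrahedron u are the
                          duals of the edges at u. *)
Definition dual_face_vertices (e : edg G) : {set cel G} :=
  [set C | e \in cell_edges C].

Definition is_cface (c : color) (e : edg G) : bool :=
  [forall C in dual_face_vertices e, ccol C != c].

(* the c-faces of the tetrahedron u (the paper: there is exactly one,
   f^c_{\ni u}) *)
Definition cfaces_of_tet (c : color) (u : vtx G) : {set edg G} :=
  [set e in edges_at u | is_cface c e].

Definition tets_at (C : cel G) : {set vtx G} := cell_vertices C.

(* ---- The minor complex Gamma^{*\c} ----
   After deleting the c-vertices and the faces incident on them, the
   remaining faces are exactly the c-faces.  Two tetrahedra are merged when
   they share a face that has been deleted. *)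
Definition merge_rel (c : color) : rel (vtx G) :=
  fun u w => [exists e, [&& u \in ends e, w \in ends e & ~~ is_cface c e]].

Definition minor_cell (c : color) (u : vtx G) : {set vtx G} :=
  [set w | connect (merge_rel c) u w].

Definition minor_cells (c : color) : {set {set vtx G}} :=
  [set minor_cell c u | u : vtx G].

(* mod-2 boundary of a region K (set of tetrahedra) of Gamma^*: the mod-2 sum
   of the boundaries of its tetrahedra, as a Z/2-chain on faces (= edges of
   Gamma), coefficient of face e *)
Definition bdry (K : {set vtx G}) (e : edg G) : bool :=
  \big[addb/false]_(u in K) (e \in edges_at u).

End Incidence.

(* At a vertex u of a 3-colex the four 3-cells through u have pairwise
   distinct colours (any two of them meet along a face, and adjacent cells are
   coloured differently), so there is exactly one cell of each colour at u.
   Hence a tetrahedron u of the dual has exactly one c-vertex C, and two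
   tetrahedra sharing a non-c-face share a c-vertex, which must then be the
   same C: merging along deleted faces never leaves the tetrahedra around C,
   and by connectedness of the 1-skeleton of C it reaches all of them.  For
   the boundary, a face (dual edge e) that is not a c-face lies in the unique
   c-cell at its endpoints, so both or none of its two tetrahedra are around
   C and it cancels mod 2; c-faces are counted identically on both sides. *)
From mathcomp Require Import all_boot.
Set Implicit Arguments. Unset Strict Implicit. Unset Printing Implicit Defensive.

Lemma big_addb_odd_card (T : finType) (A : {pred T}) (P : pred T) :
  \big[addb/false]_(i in A) P i = odd #|[set i in A | P i]|.
Proof.
rewrite -sum1dep_card big_mkcondr /= (big_morph odd oddD erefl).
by apply: eq_bigr => i _; case: (P i).
Qed.

Lemma big_addb_eq (T : finType) (A : {pred T}) (x : T) :
  \big[addb/false]_(i in A) (i == x) = (x \in A).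
Proof.
case: (boolP (x \in A)) => hx.
- by rewrite (bigD1 x) //= eqxx big1 // => i /andP [_ /negbTE].
- by rewrite big1 // => i hi; apply: contraNF hx => /eqP <-.
Qed.

Section Colex.
Variable G : complex3.

Lemma bdry_odd (K : {set vtx G}) (e : edg G) : bdry K e = odd #|K :&: ends e|.
Proof.
rewrite /bdry big_addb_odd_card; congr (odd _); apply: eq_card => u.
by rewrite !inE.
Qed.

Lemma mem_cell_vertices (C : cel G) (e : edg G) (u : vtx G) :
  e \in cell_edges C -> u \in ends e -> u \in cell_vertices C.
Proof. by move=> he hu; apply/bigcupP; exists e. Qed.

Lemma is_cfacePn (c : color) (e : edg G) :
  reflect (exists2 D, e \in cell_edges D & ccol D = c) (~~ is_cface c e).
Proof.
rewrite /is_cface negb_forall; apply: (iffP existsP) => [[D]|[D hD hDc]].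
- by rewrite negb_imply negbK inE => /andP [hD /eqP hDc]; exists D.
- by exists D; rewrite inE hD hDc eqxx.
Qed.

Hypothesis HG : is_colex3 G.

Lemma cells_at_col_inj (u : vtx G) (C1 C2 : cel G) :
  u \in cell_vertices C1 -> u \in cell_vertices C2 -> ccol C1 = ccol C2 -> C1 = C2.
Proof.
move=> h1 h2 hc; apply/eqP; apply/negPn/negP => hne.
have [f /setIP [f1 f2] _] := cx_adjacent HG h1 h2 hne.
by move: (cx_face_col HG f1 f2 hne); rewrite hc eqxx.
Qed.

Lemma cells_at_col_surj (u : vtx G) (c : color) :
  exists2 C, u \in cell_vertices C & ccol C = c.
Proof.
have col_inj : {in cells_at u &, injective (@ccol G)}.
  by move=> C1 C2; rewrite !inE; apply: cells_at_col_inj.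
have : (@ccol G) @: cells_at u = [set: color].
  apply/eqP; rewrite eqEcard subsetT cardsT card_ord.
  by rewrite card_in_imset // (cx_four_cells HG).
move/setP => /(_ c); rewrite inE => /imsetP [C hC ->].
by exists C; rewrite // inE in hC.
Qed.

Lemma tets_at_inj (c : color) :
  {in [set C : cel G | ccol C == c] &, injective (@tets_at G)}.
Proof.
move=> C1 C2; rewrite !inE => /eqP h1 /eqP h2 heq.
have /set0Pn [u hu] := cx_cell_nonempty HG C1.
apply: (cells_at_col_inj hu); last by rewrite h1 h2.
by rewrite -/(tets_at C2) -heq.
Qed.

Lemma minor_cellE (c : color) (u : vtx G) (C : cel G) :
  u \in cell_vertices C -> ccol C = c -> minor_cell c u = tets_at C.
Proof.
move=> hu hc; apply/setP => w; rewrite inE; apply/idP/idP.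
- case/connectP => p pth ->.
  elim: p u hu pth => [|x p IH] v hv //= /andP [/existsP [e] hm hp].
  apply: IH hp; case/and3P: hm => hve hxe /is_cfacePn [D hD hDc].
  have <- : D = C by apply: cells_at_col_inj (mem_cell_vertices hD hve) hv _; rewrite hDc.
  exact: mem_cell_vertices hD hxe.
- move=> hw; apply: connect_sub (cx_cell_connected HG hu hw).
  move=> x y /existsP [e /and3P [he hx hy]]; apply/connect1/existsP; exists e.
  by rewrite hx hy; apply/is_cfacePn; exists C.
Qed.

Lemma minor_cellsE (c : color) :
  minor_cells G c = [set tets_at C | C in [set C : cel G | ccol C == c]].
Proof.
apply/setP => K; apply/imsetP/imsetP => [[u _ ->]|[C]].
- have [C hu hc] := cells_at_col_surj u c.
  by exists C; rewrite ?inE ?hc // (minor_cellE hu hc).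
- rewrite inE => /eqP hc ->.
  have /set0Pn [u hu] := cx_cell_nonempty HG C.
  by exists u; rewrite // (minor_cellE hu hc).
Qed.

Lemma bdry_tets_at_cell_edge (C : cel G) (e : edg G) :
  e \in cell_edges C -> bdry (tets_at C) e = false.
Proof.
move=> he; rewrite bdry_odd (setIidPr _) ?(cx_edge HG) //.
by apply/subsetP => u; apply: mem_cell_vertices.
Qed.

Lemma bdry_tets_at_not_cface (c : color) (C : cel G) (e : edg G) :
  ccol C = c -> ~~ is_cface c e -> bdry (tets_at C) e = false.
Proof.
move=> hc /is_cfacePn [D hD hDc].
have [<-|hDC] := eqVneq D C; first exact: bdry_tets_at_cell_edge.
rewrite bdry_odd (_ : _ :&: _ = set0) ?cards0 //.
apply/setP => u; rewrite !inE; apply/negbTE/andP => -[hu hue].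
by case/eqP: hDC; apply: cells_at_col_inj (mem_cell_vertices hD hue) hu _; rewrite hDc.
Qed.

End Colex.

Theorem lemma3 (G : complex3) (HG : is_colex3 G) (c : color) :
  (* the 3-cells of the minor complex are exactly the regions nu_v obtained by
     merging all tetrahedra incident on a c-vertex v ... *)
  minor_cells G c = [set tets_at C | C in [set C : cel G | ccol C == c]]
  (* ... and distinct c-vertices index distinct 3-cells *)
  /\ {in [set C : cel G | ccol C == c] &, injective (@tets_at G)}
  (* boundary: d(nu_v) = sum over tetrahedra nu incident on v of f^c_{\ni nu} *)
  /\ (forall C : cel G, ccol C = c ->
        forall e : edg G,
          bdry (tets_at C) e =
          \big[addb/false]_(u in tets_at C)
             \big[addb/false]_(f in cfaces_of_tet c u) (f == e)).
Proof.
split; [exact: minor_cellsE | split; first exact: tets_at_inj].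
move=> C hc e; under eq_bigr do rewrite big_addb_eq inE.
case: (boolP (is_cface c e)) => hce.
- by apply: eq_bigr => u _; rewrite andbT.
- by rewrite (bdry_tets_at_not_cface HG hc hce) big1 // => u _; rewrite andbF.
Qed.
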